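(* Let $G=(V,D)$ be a directed graph and $J=J(\psi_G)$. Let $R_{\lambda_{kl}}$ be the row of $J$ for the edge $(k,l)\in D$ and $R_s$ the row for $s$. Perform the row operations $R_s\to R_s-\frac{\lambda_{kl}}{2s}R_{\lambda_{kl}}$ for every $(k,l)\in D$, followed by $R_s\to 2R_s$. Afterwards the entries of $R_s$ are as follows: the entry in column $K_{ii}$ is $2$; the entry in column $K_{ij}$ with $i\neq j$ and $(i,j)\in D$ is $-\lambda_{ij}$; the entry in column $K_{ij}$ with $i\neq j$ and $i,j$ not adjacent is $0$.
   Context: A directed graph $G=(V,D)$ has edge set $D\subseteq V\times V$ of ordered pairs $(i,j)$, $i\neq j$. $\Lambda$ is the $V\times V$ matrix with indeterminate entries $\lambda_{ij}$ for $(i,j)\in D$ and zeros elsewhere, and $s$ is a further indeterminate. Let $\psi_G(\Lambda,s)=s(I-\Lambda)(I-\Lambda)^T=K$. The transposed Jacobian $J=J(\psi_G)$ has rows indexed by $\{\lambda_{kl}:(k,l)\in D\}\cup\{s\}$ and columns indexed by entries $K_{ij}$ of the symmetric matrix $K$ (so $K_{ij}$ and $K_{ji}$ index the same column). Its entries are $\partial K_{ij}/\partial\theta$. *)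

From HB Require Import structures.
From mathcomp Require Import all_boot all_order all_algebra.
From mathcomp Require Import fraction.
From mathcomp Require Import mpoly.
Set Implicit Arguments. Unset Strict Implicit. Unset Printing Implicit Defensive.
Import Order.TTheory GRing.Theory Num.Theory.
Local Open Scope ring_scope.

(* Indeterminates: one variable for every ordered pair (k,l) of vertices
   (index mxvec_index k l), plus one variable s (the last index).
   Only the variables of edges of D actually occur (Lambda is zero elsewhere). *)
Notation nvars n := (n * n).+1.

Definition lam_idx n (k l : 'I_n) : 'I_(nvars n) :=
  widen_ord (leqnSn _) (mxvec_index k l).
Definition s_idx n : 'I_(nvars n) := ord_max.

Notation "x %:F" := (@FracField.tofrac _ x).

Section Jacobian.
Variables (R : numFieldType) (n : nat) (D : rel 'I_n).

Definition polyT := {mpoly R[nvars n]}.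

Definition s_var : polyT := 'X_(s_idx n).

Definition lam (k l : 'I_n) : polyT := if D k l then 'X_(lam_idx k l) else 0.

Definition Lambda : 'M[polyT]_n := \matrix_(k, l) lam k l.

(* K = psi_G(Lambda, s) = s (I - Lambda)(I - Lambda)^T *)
Definition Kmx : 'M[polyT]_n :=
  s_var *: ((1%:M - Lambda) *m (1%:M - Lambda)^T).

(* entry of the transposed Jacobian J in the row of variable theta and column K_ij *)
Definition Jentry (theta : 'I_(nvars n)) (i j : 'I_n) : polyT :=
  mderiv theta (Kmx i j).

Definition R_s (i j : 'I_n) : {fraction polyT} := (Jentry (s_idx n) i j)%:F.
Definition R_lam (k l : 'I_n) (i j : 'I_n) : {fraction polyT} :=
  (Jentry (lam_idx k l) i j)%:F.

(* R_s after the operations R_s -> R_s - lambda_kl/(2s) R_lambda_kl for every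
   (k,l) in D (the rows R_lambda_kl being unchanged, the order is irrelevant),
   followed by R_s -> 2 R_s. *)
Definition R_s_reduced (i j : 'I_n) : {fraction polyT} :=
  2 * (R_s i j - \sum_(k : 'I_n) \sum_(l : 'I_n | D k l)
                   ((lam k l)%:F / (2 * s_var%:F)) * R_lam k l i j).

End Jacobian.

(* With K = s A and A = (I - Lambda)(I - Lambda)^T, the row of s is A and
   the row of lambda_kl is s dA/dlambda_kl, so the reduced row is
   2 A - E A, where E = sum_kl lambda_kl d/dlambda_kl is the Euler operator
   of the lambda variables.  E is a derivation and, Lambda being linear in
   these variables, E (I - Lambda) = (I - Lambda) - I; hence
   E A = 2 A - (I - Lambda) - (I - Lambda)^T and the reduced row is
   (I - Lambda) + (I - Lambda)^T, whose entries are read off directly. *)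

From Pilot Require Import Defs.
From HB Require Import structures.
From mathcomp Require Import all_boot all_order all_algebra.
From mathcomp Require Import fraction.
From mathcomp Require Import mpoly.
Import Order.TTheory GRing.Theory Num.Theory.
Set Implicit Arguments.
Unset Strict Implicit.
Unset Printing Implicit Defensive.
Local Open Scope ring_scope.

Section LeibnizMatrix.
Variables (T : pzRingType) (f : {additive T -> T}).
Hypothesis fM : forall x y, f (x * y) = f x * y + x * f y.

Lemma map_mxM_leibniz m n p (A : 'M[T]_(m, n)) (B : 'M[T]_(n, p)) :
  map_mx f (A *m B) = map_mx f A *m B + A *m map_mx f B.
Proof.
apply/matrixP => i j; rewrite !mxE raddf_sum -big_split.
by apply: eq_bigr => k _; rewrite fM !mxE.
Qed.

End LeibnizMatrix.

Lemma mderiv_var (R : nzRingType) N (i j : 'I_N) :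
  mderiv j ('X_i : {mpoly R[N]}) = (i == j)%:R.
Proof.
rewrite mderivX mnm1E; case: eqP => [->|_]; last by rewrite scale0r.
have -> : (U_(j) - U_(j) = 0)%MM by apply/mnmP => k; rewrite mnmBE mnm0E subnn.
by rewrite mpolyX0 scale1r.
Qed.

Lemma mpolyX_var_neq0 (R : nzRingType) N (i : 'I_N) : ('X_i : {mpoly R[N]}) != 0.
Proof.
apply/eqP => /(congr1 (mcoeff U_(i))); rewrite mcoeffX eqxx mcoeff0.
by apply/eqP; rewrite oner_eq0.
Qed.

Lemma lam_idx_eq n (k l k' l' : 'I_n) :
  (lam_idx k l == lam_idx k' l') = ((k, l) == (k', l')).
Proof.
apply/eqP/eqP => [|[-> ->] //].
by move/(congr1 val) => /= /val_inj /(congr1 val) /= /val_inj /enum_rank_inj.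
Qed.

Lemma lam_idx_neq_s n (k l : 'I_n) : lam_idx k l != s_idx n.
Proof. by rewrite -val_eqE /= neq_ltn (ltn_ord (mxvec_index k l)). Qed.

Section Jacobian.
Variables (R : numFieldType) (n : nat) (D : rel 'I_n).
Local Notation P := (polyT R n).
Local Notation lam := (@lam R n D).
Local Notation s := (s_var R n).

Definition Imlam : 'M[P]_n := 1%:M - Lambda R D.
Definition Amx : 'M[P]_n := Imlam *m Imlam^T.

Lemma ImlamE i j : Imlam i j = (i == j)%:R - lam i j.
Proof. by rewrite !mxE. Qed.

Lemma lam_eq0 k l : ~~ D k l -> lam k l = 0.
Proof. by rewrite /Defs.lam => /negbTE ->. Qed.

Lemma mderiv_lam th k l : mderiv th (lam k l) = (D k l && (lam_idx k l == th))%:R.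
Proof. by rewrite /Defs.lam; case: (D k l); rewrite ?mderiv_var ?mderiv0. Qed.

Lemma mderiv_nat th (b : bool) : mderiv th (b%:R : P) = 0.
Proof. by rewrite -mpolyC_nat mderivC. Qed.

Lemma map_mderiv_s_Amx : map_mx (mderiv (s_idx n)) Amx = 0.
Proof.
have dM : map_mx (mderiv (s_idx n)) Imlam = 0.
  apply/matrixP => i j; rewrite !mxE mderivB mderiv_nat mderiv_lam.
  by rewrite (negbTE (lam_idx_neq_s i j)) andbF subr0.
rewrite map_mxM_leibniz; last exact: mderivM.
by rewrite -map_trmx dM trmx0 mul0mx mulmx0 addr0.
Qed.

Lemma Jentry_s i j : @Jentry R n D (s_idx n) i j = Amx i j.
Proof.
rewrite /Jentry mxE mderivM mderiv_var eqxx mul1r.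
by have /matrixP/(_ i j) := map_mderiv_s_Amx; rewrite !mxE => ->; rewrite mulr0 addr0.
Qed.

Lemma Jentry_lam k l i j :
  @Jentry R n D (lam_idx k l) i j = s * mderiv (lam_idx k l) (Amx i j).
Proof.
rewrite /Jentry mxE mderivM mderiv_var eq_sym (negbTE (lam_idx_neq_s k l)).
by rewrite mul0r add0r.
Qed.

Definition euler (p : P) : P :=
  \sum_(e : 'I_n * 'I_n) lam e.1 e.2 * mderiv (lam_idx e.1 e.2) p.

Lemma euler_is_zmod_morphism : zmod_morphism euler.
Proof.
move=> p q; rewrite /euler -sumrB; apply: eq_bigr => e _.
by rewrite mderivB mulrBr.
Qed.

HB.instance Definition _ :=
  GRing.isZmodMorphism.Build P P euler euler_is_zmod_morphism.

Lemma eulerM p q : euler (p * q) = euler p * q + p * euler q.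
Proof.
rewrite /euler mulr_suml mulr_sumr -big_split; apply: eq_bigr => e _.
by rewrite /= mderivM mulrDr !mulrA [lam _ _ * p]mulrC.
Qed.

Lemma euler_nat (b : bool) : euler b%:R = 0.
Proof. by apply: big1 => e _; rewrite mderiv_nat mulr0. Qed.

Lemma euler_lam i m : euler (lam i m) = lam i m.
Proof.
rewrite /euler (bigD1 (i, m)) //= big1 ?addr0 => [|e ne].
  rewrite mderiv_lam eqxx andbT.
  by case: (boolP (D i m)) => [_|/lam_eq0 ->]; rewrite ?mulr1 ?mul0r.
by rewrite mderiv_lam lam_idx_eq -surjective_pairing eq_sym (negbTE ne) andbF mulr0.
Qed.

Lemma map_euler_Imlam : map_mx euler Imlam = Imlam - 1%:M.
Proof.
apply/matrixP => i j; rewrite !mxE raddfB /= euler_nat euler_lam.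
by rewrite sub0r addrAC subrr sub0r.
Qed.

Lemma map_euler_Amx : map_mx euler Amx = Amx *+ 2 - (Imlam + Imlam^T).
Proof.
rewrite map_mxM_leibniz; last exact: eulerM.
rewrite -map_trmx map_euler_Imlam [(Imlam - _)^T]raddfB /= trmx1.
rewrite mulmxBl mulmxBr mul1mx mulmx1.
by rewrite /Amx addrACA mulr2n (opprD Imlam) [- Imlam^T + _]addrC.
Qed.

Lemma R_s_reducedE i j : @R_s_reduced R n D i j = (Imlam i j + Imlam j i)%:F.
Proof.
have s_neq0 : s%:F != 0 by rewrite tofrac_eq0 mpolyX_var_neq0.
have two_neq0 : 2 != 0 :> {fraction P}.
  rewrite -(rmorph_nat (@FracField.tofrac P)) tofrac_eq0.
  by rewrite -mpolyC_nat mpolyC_eq0 pnatr_eq0.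
have sumE : \sum_k \sum_(l | D k l) (lam k l)%:F / (2 * s%:F) * @R_lam R n D k l i j
    = (euler (Amx i j))%:F / 2.
  transitivity (\sum_k \sum_l (lam k l * mderiv (lam_idx k l) (Amx i j))%:F / 2);
    last by rewrite /euler rmorph_sum mulr_suml pair_bigA.
  apply: eq_bigr => k _; rewrite big_mkcond /=; apply: eq_bigr => l _.
  rewrite /R_lam Jentry_lam; case: ifP => [_|/negbT/lam_eq0->].
    rewrite !rmorphM /= [2 * _]mulrC invfM -!mulrA [_^-1 * (_ * _)]mulrCA.
    by rewrite mulKf // [2^-1 * _]mulrC.
  by rewrite mul0r rmorph0 mul0r.
have EAij : euler (Amx i j) = Amx i j *+ 2 - (Imlam i j + Imlam j i).
  (* generalized first, so that mxE cannot unfold Amx and Imlam themselves *)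
  by move: map_euler_Amx; move: (Amx) (Imlam) => A M /matrixP/(_ i j); rewrite !mxE.
rewrite /R_s_reduced sumE /R_s Jentry_s EAij rmorphB rmorphMn /=.
by rewrite mulrBr [2 * (_ / 2)]mulrC divfK // mulr_natl opprB addrC subrK.
Qed.

End Jacobian.

Theorem lemma3p3 (R : numFieldType) (n : nat) (D : rel 'I_n)
  (irrD : forall i : 'I_n, ~~ D i i) :
  (forall i : 'I_n, @R_s_reduced R n D i i = 2) /\
  (forall i j : 'I_n, i != j -> D i j -> ~~ D j i ->
     @R_s_reduced R n D i j = - (@lam R n D i j)%:F) /\
  (forall i j : 'I_n, i != j -> ~~ D i j -> ~~ D j i ->
     @R_s_reduced R n D i j = 0).
Proof.
have offdiag i j :
    i != j -> @R_s_reduced R n D i j = - (@lam R n D i j + @lam R n D j i)%:F.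
  move=> ij; rewrite R_s_reducedE !ImlamE (negbTE ij) eq_sym (negbTE ij).
  by rewrite !sub0r -opprD rmorphN.
split; [|split].
- by move=> i; rewrite R_s_reducedE ImlamE eqxx lam_eq0 // subr0 rmorphD rmorph1.
- by move=> i j ij _ nDji; rewrite offdiag // (lam_eq0 _ nDji) addr0.
- by move=> i j ij nDij nDji; rewrite offdiag // !lam_eq0 // addr0 rmorph0 oppr0.
Qed.
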